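(* Let $R$ be a discrete valuation ring with field of fractions $K$ and uniformizer $\pi$, $V$ a finite-dimensional $K$-vector space, and $L,M$ lattices of $V$. Then $L\cap M\subset m_-(L,M)\subset m_+(L,M)\subset L+M$.
   Context: A lattice of $V$ is a free $R$-submodule $L$ with $K\otimes_R L\to V$ an isomorphism. $m_-(L,M)=\sum_{n\in\mathbb Z}(\pi^nL\cap\pi^{-n}M)$ (the $R$-submodule generated by these) and $m_+(L,M)=\bigcap_{n\in\mathbb Z}(\pi^nL+\pi^{-n}M)$. *)

From HB Require Import structures.
From mathcomp Require Import all_boot all_order all_algebra.
Set Implicit Arguments. Unset Strict Implicit. Unset Printing Implicit Defensive.
Import GRing.Theory Num.Theory.
Local Open Scope ring_scope.

Definition is_dvr (K : fieldType) (R : {pred K}) (pi : K) : Prop :=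
  [/\ 1 \in R,
      (forall x y, x \in R -> y \in R -> x - y \in R),
      (forall x y, x \in R -> y \in R -> x * y \in R),
      pi \in R /\ pi != 0 /\ pi^-1 \notin R &
      (forall x : K, x != 0 -> exists (n : int) (u : K),
          [/\ u \in R, u^-1 \in R & x = u * pi ^ n])].

Definition vset (V : Type) := V -> Prop.

(* L is a lattice: a free R-submodule of V with an R-basis b such that
   K (x)_R L -> V is an isomorphism, i.e. b is a K-basis of V and L is the
   set of R-linear combinations of b. *)
Definition is_lattice (K : fieldType) (R : {pred K}) (V : vectType K)
  (L : vset V) : Prop :=
  exists b : seq V, basis_of fullv b /\
    forall x, L x <-> exists c : 'I_(size b) -> K,
      (forall i, c i \in R) /\ x = \sum_(i < size b) c i *: b`_i.

Definition scale_set (K : fieldType) (V : vectType K) (a : K) (L : vset V)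
  : vset V := fun x => exists y, L y /\ x = a *: y.

Definition sum_set (K : fieldType) (V : vectType K) (L M : vset V) : vset V :=
  fun x => exists a b, [/\ L a, M b & x = a + b].

Definition Rspan (K : fieldType) (R : {pred K}) (V : vectType K) (S : vset V)
  : vset V := fun x => exists (n : nat) (v : 'I_n -> V) (c : 'I_n -> K),
    [/\ forall i, S (v i), forall i, c i \in R & x = \sum_(i < n) c i *: v i].

Definition m_minus (K : fieldType) (R : {pred K}) (pi : K) (V : vectType K)
  (L M : vset V) : vset V :=
  Rspan R (fun x => exists n : int,
             scale_set (pi ^ n) L x /\ scale_set (pi ^ (- n)) M x).

Definition m_plus (K : fieldType) (pi : K) (V : vectType K)
  (L M : vset V) : vset V :=
  fun x => forall n : int,
    sum_set (scale_set (pi ^ n) L) (scale_set (pi ^ (- n)) M) x.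

From HB Require Import structures.
From mathcomp Require Import all_boot all_order all_algebra.
Local Open Scope ring_scope.
Import Order.TTheory GRing.Theory Num.Theory.

Set Implicit Arguments.
Unset Strict Implicit.
Unset Printing Implicit Defensive.

(* Both outer inclusions are the case n = 0 of the definitions.  For the
   middle one, pi^n L + pi^-n M is an R-module, so it suffices that it
   contains every generator y in pi^k L /\ pi^-k M of m_-(L,M); since pi is
   in R the chain pi^n L decreases in n, so y lies in pi^n L when n <= k and
   in pi^-n M when k < n. *)

Definition is_Rsubmodule (K : fieldType) (R : {pred K}) (V : vectType K)
    (L : vset V) : Prop :=
  [/\ L 0, (forall x y, L x -> L y -> L (x + y)) &
      (forall r x, r \in R -> L x -> L (r *: x))].

Section SubmoduleClosure.
Variables (K : fieldType) (R : {pred K}) (V : vectType K).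

Lemma scale_set_submodule (a : K) (L : vset V) :
  is_Rsubmodule R L -> is_Rsubmodule R (scale_set a L).
Proof.
case=> L0 LD LZ; split.
- by exists 0; rewrite scaler0.
- move=> _ _ [x [Lx ->]] [y [Ly ->]]; exists (x + y).
  by rewrite scalerDr; split => //; apply: LD.
- move=> r _ Rr [x [Lx ->]]; exists (r *: x).
  by rewrite !scalerA mulrC; split => //; apply: LZ.
Qed.

Lemma sum_set_submodule (L M : vset V) :
  is_Rsubmodule R L -> is_Rsubmodule R M -> is_Rsubmodule R (sum_set L M).
Proof.
case=> L0 LD LZ [M0 MD MZ]; split.
- by exists 0, 0; rewrite addr0.
- move=> _ _ [a [b [La Mb ->]]] [a' [b' [La' Mb' ->]]].
  exists (a + a'), (b + b'); rewrite addrACA.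
  by split; [apply: LD | apply: MD |].
- move=> r _ Rr [a [b [La Mb ->]]].
  exists (r *: a), (r *: b); rewrite scalerDr.
  by split; [apply: LZ | apply: MZ |].
Qed.

Lemma Rspan_sub (S T : vset V) :
  is_Rsubmodule R T -> (forall y, S y -> T y) -> forall x, Rspan R S x -> T x.
Proof.
case=> T0 TD TZ ST x [n [v [c [Sv Rc ->]]]].
elim: n v c Sv Rc => [|n IHn] v c Sv Rc; first by rewrite big_ord0.
rewrite big_ord_recr /=; apply: TD; last by apply: TZ => //; apply: ST.
by apply: (IHn (fun i => v (widen_ord (leqnSn n) i)))
  => [i|i]; [apply: Sv | apply: Rc].
Qed.

End SubmoduleClosure.

Section DVR.
Variables (K : fieldType) (R : {pred K}) (pi : K) (V : vectType K).
Hypothesis dvrR : is_dvr R pi.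

Lemma dvr_mem0 : 0 \in R.
Proof. by have [R1 RB _ _ _] := dvrR; rewrite -(subrr 1); apply: RB. Qed.

Lemma dvr_memD x y : x \in R -> y \in R -> x + y \in R.
Proof.
move=> Rx Ry; have [_ RB _ _ _] := dvrR.
rewrite -[y]opprK; apply: (RB) => //.
by rewrite -sub0r; apply: RB; first exact: dvr_mem0.
Qed.

Lemma dvr_memM x y : x \in R -> y \in R -> x * y \in R.
Proof. by have [_ _ RM _ _] := dvrR; apply: RM. Qed.

Lemma dvr_mem_uniformizerX (m : nat) : pi ^+ m \in R.
Proof.
have [R1 _ _ [Rpi _] _] := dvrR.
by elim: m => [|m IHm]; rewrite ?expr0 // exprS dvr_memM.
Qed.

Lemma lattice_submodule (L : vset V) : is_lattice R L -> is_Rsubmodule R L.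
Proof.
case=> b [_ Lb]; split.
- apply/Lb; exists (fun=> 0); split => [i|]; first exact: dvr_mem0.
  by rewrite big1 // => i _; rewrite scale0r.
- move=> _ _ /Lb [c [Rc ->]] /Lb [d [Rd ->]]; apply/Lb.
  exists (fun i => c i + d i); split => [i|]; first exact: dvr_memD.
  by rewrite -big_split; apply: eq_bigr => i _; rewrite scalerDl.
- move=> r _ Rr /Lb [c [Rc ->]]; apply/Lb.
  exists (fun i => r * c i); split => [i|]; first exact: dvr_memM.
  by rewrite scaler_sumr; apply: eq_bigr => i _; rewrite scalerA.
Qed.

Lemma scale_set_uniformizer_le (L : vset V) (n k : int) y :
  is_Rsubmodule R L -> n <= k ->
  scale_set (pi ^ k) L y -> scale_set (pi ^ n) L y.
Proof.
have [_ _ _ [_ [pi_neq0 _]] _] := dvrR.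
case=> _ _ LZ le_nk [z [Lz ->]]; exists (pi ^ (k - n) *: z); split.
  apply: LZ => //.
  by rewrite -(gez0_abs (m := k - n)) ?subr_ge0 // dvr_mem_uniformizerX.
by rewrite scalerA -expfzDr // addrC subrK.
Qed.

Lemma m_minus_sub_m_plus (L M : vset V) x :
  is_Rsubmodule R L -> is_Rsubmodule R M ->
  m_minus R pi L M x -> m_plus pi L M x.
Proof.
move=> subL subM mx n; apply: (Rspan_sub _ _ mx).
  by apply: sum_set_submodule; apply: scale_set_submodule.
move=> y [k [Ly My]]; case: (lerP n k) => [le_nk | lt_kn].
- exists y, 0; rewrite addr0; split => //.
    exact: scale_set_uniformizer_le subL le_nk Ly.
  by case: (scale_set_submodule (pi ^ (- n)) subM).
- exists 0, y; rewrite add0r; split => //.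
    by case: (scale_set_submodule (pi ^ n) subL).
  by apply: (scale_set_uniformizer_le subM _ My); rewrite lerN2 ltW.
Qed.

End DVR.

Lemma meet_sub_m_minus (K : fieldType) (R : {pred K}) (pi : K)
    (V : vectType K) (L M : vset V) x :
  1 \in R -> L x /\ M x -> m_minus R pi L M x.
Proof.
move=> R1 [Lx Mx]; exists 1%N, (fun=> x), (fun=> 1).
rewrite big_ord1 scale1r; split => // _.
by exists 0; rewrite oppr0 expr0z; split; exists x; rewrite scale1r.
Qed.

Lemma m_plus_sub_sum_set (K : fieldType) (pi : K) (V : vectType K)
    (L M : vset V) x :
  m_plus pi L M x -> sum_set L M x.
Proof.
move=> /(_ 0) [_ [_ [[a [La ->]] [b [Mb ->]] ->]]].
by exists a, b; rewrite oppr0 expr0z !scale1r.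
Qed.

Theorem proposition1p2p1 (K : fieldType) (R : {pred K}) (pi : K)
  (V : vectType K) (L M : vset V) :
  is_dvr R pi -> is_lattice R L -> is_lattice R M ->
  [/\ (forall x, L x /\ M x -> m_minus R pi L M x),
      (forall x, m_minus R pi L M x -> m_plus pi L M x) &
      (forall x, m_plus pi L M x -> sum_set L M x)].
Proof.
move=> dvrR /(lattice_submodule dvrR) subL /(lattice_submodule dvrR) subM.
have [R1 _ _ _ _] := dvrR.
split=> x; first exact: meet_sub_m_minus.
  exact: m_minus_sub_m_plus.
exact: m_plus_sub_sum_set.
Qed.
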